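(* Let $\mathbb{K}\in\{\mathbb{R},\mathbb{C}\}$, $\star\in\{*,T\}$, $\epsilon_1,\epsilon_2\in\{1,-1\}$, and let $Q(\lambda)=\lambda^2M+\lambda D+K\in\mathbb{K}^{n\times n}[\lambda]$ satisfy $M^\star=\epsilon_1M$, $D^\star=\epsilon_2D$, $K^\star=\epsilon_1K$. Let $(X_j,\Lambda_j)\in\mathbb{K}^{n\times p_j}\times\mathbb{K}^{p_j\times p_j}$, $j\in\{1,2\}$, be invariant pairs of $Q(\lambda)$, and set $S_{jk}:=X_j^\star MX_k\Lambda_k+\epsilon_1\epsilon_2\Lambda_j^\star X_j^\star MX_k+X_j^\star DX_k$ for $j,k\in\{1,2\}$. Then: (a) $\lambda_0\in\mathbb{C}$ is an eigenvalue of $Q(\lambda)$ (i.e. $\det(\lambda_0^2M+\lambda_0D+K)=0$) if and only if $\epsilon_1\epsilon_2\lambda_0^\star$ is an eigenvalue of $Q(\lambda)$; (b) $S_{jk}\Lambda_k=\epsilon_1\epsilon_2\Lambda_j^\star S_{jk}$; (c) $S_{jk}=0$ whenever $\sigma(\epsilon_1\epsilon_2\Lambda_j^\star)\cap\sigma(\Lambda_k)=\emptyset$.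
   Context: For a matrix $A$, $A^*$ is the conjugate transpose and $A^T$ the transpose; $A^\star$ means $A^*$ if $\star=*$ and $A^T$ if $\star=T$. For $\lambda\in\mathbb{C}$, $\lambda^\star=\overline{\lambda}$ if $\star=*$ and $\lambda^\star=\lambda$ if $\star=T$. $\sigma(A)$ is the spectrum. A pair $(X,\Lambda)\in\mathbb{K}^{n\times p}\times\mathbb{K}^{p\times p}$ is an invariant pair of $Q(\lambda)$ if $MX\Lambda^2+DX\Lambda+KX=0$. *)

From mathcomp Require Import all_boot all_order all_algebra.
From mathcomp Require Import complex reals.
Set Implicit Arguments. Unset Strict Implicit. Unset Printing Implicit Defensive.
Import GRing.Theory Num.Theory.
Local Open Scope ring_scope.

(* The choice of the field K in {R, C}: all data live in C = R[i]; when K = R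
   every entry is required to be real. *)
Inductive field_choice := KR | KC.

Definition inK {R : realType} (k : field_choice) (x : R[i]) : bool :=
  match k with KR => x \is Num.real | KC => true end.

Definition mxK {R : realType} (k : field_choice) {m n : nat} (A : 'M[R[i]]_(m, n)) : Prop :=
  forall i j, inK k (A i j).

Inductive star_choice := SConj | STrans.

Definition mxstar {R : realType} (s : star_choice) {m n : nat}
  (A : 'M[R[i]]_(m, n)) : 'M[R[i]]_(n, m) :=
  match s with SConj => (map_mx Num.conj A)^T | STrans => A^T end.

Definition sstar {R : realType} (s : star_choice) (x : R[i]) : R[i] :=
  match s with SConj => x^* | STrans => x end.

Definition Qeval {R : realType} {n : nat} (M D K : 'M[R[i]]_n) (l : R[i]) : 'M[R[i]]_n :=
  (l ^+ 2) *: M + l *: D + K.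

Definition quad_eigenvalue {R : realType} {n : nat} (M D K : 'M[R[i]]_n) (l : R[i]) : Prop :=
  \det (Qeval M D K l) = 0.

Definition invariant_pair {R : realType} {n p : nat} (M D K : 'M[R[i]]_n)
  (X : 'M[R[i]]_(n, p)) (L : 'M[R[i]]_p) : Prop :=
  M *m X *m (L *m L) + D *m X *m L + K *m X = 0.

Definition Smx {R : realType} (s : star_choice) (e1 e2 : R[i]) {n pj pk : nat}
  (M D : 'M[R[i]]_n) (Xj : 'M[R[i]]_(n, pj)) (Lj : 'M[R[i]]_pj)
  (Xk : 'M[R[i]]_(n, pk)) (Lk : 'M[R[i]]_pk) : 'M[R[i]]_(pj, pk) :=
  mxstar s Xj *m M *m Xk *m Lk + (e1 * e2) *: (mxstar s Lj *m mxstar s Xj *m M *m Xk)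
  + mxstar s Xj *m D *m Xk.

Definition spectra_disjoint {R : realType} {p q : nat} (A : 'M[R[i]]_p) (B : 'M[R[i]]_q) : Prop :=
  forall z : R[i], ~ (eigenvalue A z /\ eigenvalue B z).

Definition bc_conclusions {R : realType} (s : star_choice) (e1 e2 : R[i]) {n pj pk : nat}
  (M D : 'M[R[i]]_n) (Xj : 'M[R[i]]_(n, pj)) (Lj : 'M[R[i]]_pj)
  (Xk : 'M[R[i]]_(n, pk)) (Lk : 'M[R[i]]_pk) : Prop :=
  Smx s e1 e2 M D Xj Lj Xk Lk *m Lk = (e1 * e2) *: (mxstar s Lj *m Smx s e1 e2 M D Xj Lj Xk Lk)
  /\ (spectra_disjoint ((e1 * e2) *: mxstar s Lj) Lk -> Smx s e1 e2 M D Xj Lj Xk Lk = 0).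

(* Part (a): the symmetry of the coefficients gives Q(l)^star = e1 Q(e1 e2 l^star), and
   det (A^star) = (det A)^star vanishes exactly when det A does.
   Part (b): with e := e1 e2, the difference S_jk L_k - e L_j^star S_jk equals
   X_j^star (M X_k L_k^2 + D X_k L_k + K X_k) minus the e1-multiple of the starred
   invariant-pair equation of (X_j, L_j) applied to X_k, so it vanishes.
   Part (c) is Sylvester's theorem: if S B = A S then S p(B) = p(A) S for every
   polynomial p; when A and B have no common eigenvalue their characteristic
   polynomials are coprime, and a Bezout identity u chi_A + v chi_B = 1 evaluated
   through Cayley-Hamilton yields S = 0. *)
From mathcomp Require Import all_boot all_order all_algebra.
From mathcomp Require Import complex reals.
From mathcomp Require Import ring.
Import GRing.Theory Num.Theory.
Local Open Scope ring_scope.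
Set Implicit Arguments. Unset Strict Implicit.

Lemma mulmx_horner_intertwine (F : comNzRingType) p q (A : 'M[F]_p.+1) (B : 'M[F]_q.+1)
    (S : 'M[F]_(p.+1, q.+1)) :
  S *m B = A *m S -> forall r, S *m horner_mx B r = horner_mx A r *m S.
Proof.
move=> SB_AS; elim/poly_ind => [|r c IHr]; first by rewrite !rmorph0 mulmx0 mul0mx.
rewrite !rmorphD !rmorphM /= !horner_mx_X !horner_mx_C -!mulmxE.
rewrite mulmxDr mulmxDl mul_mx_scalar mul_scalar_mx; congr (_ + _).
by rewrite !mulmxA IHr -!mulmxA SB_AS.
Qed.

Lemma sylvester_eq0 (F : closedFieldType) p q (A : 'M[F]_p) (B : 'M[F]_q)
    (S : 'M[F]_(p, q)) :
  S *m B = A *m S -> (forall z, ~ (eigenvalue A z /\ eigenvalue B z)) -> S = 0.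
Proof.
case: p A S => [|p] A S; first by rewrite [S]flatmx0.
case: q B S => [|q] B S; first by rewrite [S]thinmx0.
move=> SB_AS disjAB.
have coprime_char : coprimep (char_poly A) (char_poly B).
  apply/Pdiv.ClosedField.coprimepP => z rootA; apply/negP => rootB.
  by apply: (disjAB z); rewrite !eigenvalue_root_char.
have [[u v] /= bezout] := Bezout_eq1_coprimepP _ _ coprime_char.
have -> : S = S *m horner_mx B (u * char_poly A + v * char_poly B).
  by rewrite bezout rmorph1 mulmx1.
rewrite rmorphD !rmorphM /= Cayley_Hamilton mulr0 addr0 -rmorphM mulrC.
by rewrite (mulmx_horner_intertwine SB_AS) rmorphM /= Cayley_Hamilton mul0r mul0mx.
Qed.

Section Star.
Variables (R : realType) (s : star_choice).
Implicit Types (a : R[i]).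

Lemma mxstarD m n (A B : 'M[R[i]]_(m, n)) : mxstar s (A + B) = mxstar s A + mxstar s B.
Proof. by case: s => /=; rewrite ?map_mxD linearD. Qed.

Lemma mxstarZ m n a (A : 'M[R[i]]_(m, n)) : mxstar s (a *: A) = sstar s a *: mxstar s A.
Proof. by case: s => /=; rewrite ?map_mxZ linearZ. Qed.

Lemma mxstarM m n p (A : 'M[R[i]]_(m, n)) (B : 'M[R[i]]_(n, p)) :
  mxstar s (A *m B) = mxstar s B *m mxstar s A.
Proof. by case: s => /=; rewrite ?map_mxM trmx_mul. Qed.

Lemma mxstar0 m n : mxstar s (0 : 'M[R[i]]_(m, n)) = 0.
Proof. by case: s => /=; rewrite ?map_mx0 trmx0. Qed.

Lemma det_mxstar n (A : 'M[R[i]]_n) : \det (mxstar s A) = sstar s (\det A).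
Proof. by case: s => /=; rewrite det_tr ?det_map_mx. Qed.

Lemma sstarX a k : sstar s (a ^+ k) = sstar s a ^+ k.
Proof. by case: s => //=; rewrite rmorphXn. Qed.

Lemma sstar_eq0 a : (sstar s a == 0) = (a == 0).
Proof. by case: s => //=; rewrite conjC_eq0. Qed.

End Star.

Section StructuredQuadratic.
Variables (R : realType) (s : star_choice) (e1 e2 : R[i]) (n : nat) (M D K : 'M[R[i]]_n).
Hypotheses (e1_sign : e1 * e1 = 1) (e2_sign : e2 * e2 = 1).
Hypotheses (M_star : mxstar s M = e1 *: M) (D_star : mxstar s D = e2 *: D)
  (K_star : mxstar s K = e1 *: K).

Lemma mxstar_Qeval l : mxstar s (Qeval M D K l) = e1 *: Qeval M D K (e1 * e2 * sstar s l).
Proof.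
rewrite /Qeval !mxstarD !mxstarZ M_star D_star K_star sstarX !scalerDr !scalerA.
congr (_ *: _ + _ *: _ + _).
  transitivity (e1 * ((e1 * e1) * (e2 * e2)) * sstar s l ^+ 2); last by ring.
  by rewrite e1_sign e2_sign !mulr1 mulrC.
transitivity ((e1 * e1) * e2 * sstar s l); last by ring.
by rewrite e1_sign mul1r mulrC.
Qed.

Lemma quad_eigenvalue_star l :
  quad_eigenvalue M D K l <-> quad_eigenvalue M D K (e1 * e2 * sstar s l).
Proof.
have := congr1 determinant (mxstar_Qeval l); rewrite det_mxstar detZ => det_star.
have e1n_neq0 : e1 ^+ n != 0.
  by rewrite expf_neq0 //; apply: contra_eq_neq e1_sign => ->; rewrite mul0r eq_sym oner_neq0.
rewrite /quad_eigenvalue; split=> [/eqP detQ0 | detQ'0]; apply/eqP.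
  have : e1 ^+ n * \det (Qeval M D K (e1 * e2 * sstar s l)) == 0.
    by rewrite -det_star sstar_eq0.
  by rewrite mulf_eq0 (negPf e1n_neq0).
by rewrite -(sstar_eq0 s) det_star detQ'0 mulr0.
Qed.

Lemma invariant_pair_star p (X : 'M[R[i]]_(n, p)) L : invariant_pair M D K X L ->
  mxstar s L *m mxstar s L *m mxstar s X *m M
  + (e1 * e2) *: (mxstar s L *m mxstar s X *m D) + mxstar s X *m K = 0.
Proof.
move=> /(congr1 (fun A => e1 *: mxstar s A)) /=.
rewrite mxstar0 scaler0 !mxstarD !mxstarM M_star D_star K_star.
by rewrite -!scalemxAr !scalerDr !scalerA !mulmxA e1_sign !scale1r.
Qed.

Section InvariantPairs.
Variables (pj pk : nat) (Xj : 'M[R[i]]_(n, pj)) (Lj : 'M[R[i]]_pj).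
Variables (Xk : 'M[R[i]]_(n, pk)) (Lk : 'M[R[i]]_pk).
Hypotheses (pair_j : invariant_pair M D K Xj Lj) (pair_k : invariant_pair M D K Xk Lk).

Local Notation S := (Smx s e1 e2 M D Xj Lj Xk Lk).

Lemma Smx_intertwine : S *m Lk = (e1 * e2) *: (mxstar s Lj *m S).
Proof.
have e_sign : e1 * e2 * (e1 * e2) = 1.
  by transitivity ((e1 * e1) * (e2 * e2)); [ring | rewrite e1_sign e2_sign mulr1].
have eq_k := congr1 (mulmx (mxstar s Xj)) pair_k.
have eq_j := congr1 (mulmx^~ Xk) (invariant_pair_star pair_j).
rewrite mulmx0 !mulmxDr !mulmxA in eq_k.
rewrite mul0mx !mulmxDl -!scalemxAl in eq_j.
rewrite /Smx !mulmxDl !mulmxDr -!scalemxAl -!scalemxAr !scalerDr scalerA e_sign scale1r.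
by rewrite !mulmxA addrAC (addIr _ (etrans eq_k (esym eq_j))) addrC addrA.
Qed.

Lemma Smx_eq0 : spectra_disjoint ((e1 * e2) *: mxstar s Lj) Lk -> S = 0.
Proof. by apply: sylvester_eq0; rewrite Smx_intertwine scalemxAl. Qed.

Lemma bc_conclusionsP : bc_conclusions s e1 e2 M D Xj Lj Xk Lk.
Proof. by split; [exact: Smx_intertwine | exact: Smx_eq0]. Qed.

End InvariantPairs.
End StructuredQuadratic.

Lemma sign_mulrr (F : ringType) (e : F) : e = 1 \/ e = -1 -> e * e = 1.
Proof. by case=> ->; rewrite ?mulrNN mulr1. Qed.

Theorem proposition2p2 (R : realType) (k : field_choice) (s : star_choice)
  (e1 e2 : R[i]) (n p1 p2 : nat) (M D K : 'M[R[i]]_n)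
  (X1 : 'M[R[i]]_(n, p1)) (L1 : 'M[R[i]]_p1)
  (X2 : 'M[R[i]]_(n, p2)) (L2 : 'M[R[i]]_p2) :
  (e1 = 1 \/ e1 = -1) -> (e2 = 1 \/ e2 = -1) ->
  mxK k M -> mxK k D -> mxK k K ->
  mxK k X1 -> mxK k L1 -> mxK k X2 -> mxK k L2 ->
  mxstar s M = e1 *: M -> mxstar s D = e2 *: D -> mxstar s K = e1 *: K ->
  invariant_pair M D K X1 L1 -> invariant_pair M D K X2 L2 ->
  (forall l0 : R[i],
     quad_eigenvalue M D K l0 <-> quad_eigenvalue M D K (e1 * e2 * sstar s l0))
  /\ bc_conclusions s e1 e2 M D X1 L1 X1 L1
  /\ bc_conclusions s e1 e2 M D X1 L1 X2 L2
  /\ bc_conclusions s e1 e2 M D X2 L2 X1 L1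
  /\ bc_conclusions s e1 e2 M D X2 L2 X2 L2.
Proof.
move=> /sign_mulrr e1_sign /sign_mulrr e2_sign _ _ _ _ _ _ _ M_star D_star K_star pair1 pair2.
have bc := bc_conclusionsP e1_sign e2_sign M_star D_star K_star.
split; first exact: quad_eigenvalue_star.
by split; [|split; [|split]]; apply: bc.
Qed.
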